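(* Let $\mathcal C$ be an immersed curve and $P_1,P_2,\dots,P_N$ distinct points on $\mathcal C$ listed in order along $\mathcal C$. Assume there are positive constants $A_0$ and $R_0$ such that (a) for all $j$ with $1\le j\le N-2$, $\frac{A_0}{2}\le\mathrm{Area}(\triangle P_jP_{j+1}P_{j+2})$; (b) for each $j$ with $1\le j\le N-2$ the points $P_j,P_{j+1},P_{j+2}$ lie on a circle of radius $\ge R_0$. Then $$N<2+\frac{\mathrm{Length}(\mathcal C)}{(A_0R_0)^{1/3}}.$$ *)

From Stdlib Require Import Reals.
From Coquelicot Require Import Coquelicot.
Open Scope R_scope.

Definition immersed_curve (x y x' y' : R -> R) (a b : R) : Prop :=
  a < b /\
  forall t, a <= t <= b ->
    is_derive x t (x' t) /\ is_derive y t (y' t) /\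
    continuous x' t /\ continuous y' t /\
    (x' t <> 0 \/ y' t <> 0).

Definition curve_length (x' y' : R -> R) (a b : R) : R :=
  RInt (fun t => sqrt (x' t ^ 2 + y' t ^ 2)) a b.

Definition tri_area (P Q S : R * R) : R :=
  Rabs ((fst Q - fst P) * (snd S - snd P) - (snd Q - snd P) * (fst S - fst P)) / 2.

Definition dist2 (P Q : R * R) : R :=
  sqrt ((fst P - fst Q) ^ 2 + (snd P - snd Q) ^ 2).

Definition on_circle_of_radius (P Q S : R * R) (r : R) : Prop :=
  exists c : R * R, dist2 P c = r /\ dist2 Q c = r /\ dist2 S c = r.

From Stdlib Require Import Reals Lra Lia.
From Coquelicot Require Import Coquelicot.
Open Scope R_scope.

(* For three consecutive points with sides [a = |P_j P_(j+1)|],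
   [b = |P_(j+1) P_(j+2)|] and [c = |P_j P_(j+2)|], the circumradius formula
   [a b c = 4 r Area] gives [a b c >= 2 A0 R0], while [c <= a + b] and AM-GM
   give [4 a b c <= (a + b)^3]; hence [a + b >= 2 (A0 R0)^(1/3)].  Summing
   over the [N - 2] triples counts every chord of the inscribed polygon at
   most twice, and the first chord, which is positive, only once; so
   [(N - 2) (A0 R0)^(1/3)] is strictly less than the length of the polygon,
   which is at most the length of the curve. *)

Lemma norm_pair (u v : R) : norm (u, v) = sqrt (u ^ 2 + v ^ 2).
Proof. rewrite <- (pow2_abs u), <- (pow2_abs v). reflexivity. Qed.

Lemma dist2_norm_minus (P Q : R * R) : dist2 P Q = norm (minus P Q).
Proof.
  destruct P as [p1 p2], Q as [q1 q2].
  change (minus (p1, p2) (q1, q2)) with (p1 - q1, p2 - q2).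
  now rewrite norm_pair.
Qed.

Lemma dist2_triangle (P Q S : R * R) : dist2 P S <= dist2 P Q + dist2 Q S.
Proof.
  rewrite !dist2_norm_minus.
  replace (minus P S) with (plus (minus P Q) (minus Q S)).
  - exact (@norm_triangle _ (prod_NormedModule R_AbsRing R_NormedModule R_NormedModule) _ _).
  - unfold minus. now rewrite <- plus_assoc, (plus_assoc (opp Q)), plus_opp_l, plus_zero_l.
Qed.

Lemma dist2_pos (P Q : R * R) : P <> Q -> 0 < dist2 P Q.
Proof.
  destruct P as [p1 p2], Q as [q1 q2]. intros HPQ.
  rewrite dist2_norm_minus. apply norm_gt_0. intros E.
  change ((p1 - q1, p2 - q2) = (0, 0)) in E. injection E as E1 E2.
  apply HPQ. f_equal; lra.
Qed.

Lemma dist2_sq (P Q : R * R) :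
  dist2 P Q ^ 2 = (fst P - fst Q) ^ 2 + (snd P - snd Q) ^ 2.
Proof.
  unfold dist2. apply pow2_sqrt.
  apply Rplus_le_le_0_compat; apply pow2_ge_0.
Qed.

Lemma dist2_ge0 (P Q : R * R) : 0 <= dist2 P Q.
Proof. apply sqrt_pos. Qed.

Lemma tri_area_ge0 (P Q S : R * R) : 0 <= tri_area P Q S.
Proof. unfold tri_area, Rdiv. apply Rmult_le_pos; [apply Rabs_pos | lra]. Qed.

(* With [u = Q - P], [w = S - P] and [m = c - P], the circle conditions
   say [2 m.u = |u|^2] and [2 m.w = |w|^2]. *)
Lemma circumcircle_identity (ux uy wx wy mx my : R) :
  2 * (mx * ux + my * uy) = ux ^ 2 + uy ^ 2 ->
  2 * (mx * wx + my * wy) = wx ^ 2 + wy ^ 2 ->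
  (ux ^ 2 + uy ^ 2) * ((ux - wx) ^ 2 + (uy - wy) ^ 2) * (wx ^ 2 + wy ^ 2) =
  4 * (mx ^ 2 + my ^ 2) * (ux * wy - uy * wx) ^ 2.
Proof.
  intros Hu Hw.
  (* [(m.u) w - (m.w) u] is [m] turned by a right angle and scaled by [u x w]. *)
  replace (4 * (mx ^ 2 + my ^ 2) * (ux * wy - uy * wx) ^ 2) with
    (4 * (((mx * ux + my * uy) * wx - (mx * wx + my * wy) * ux) ^ 2 +
          ((mx * ux + my * uy) * wy - (mx * wx + my * wy) * uy) ^ 2)) by ring.
  replace (mx * ux + my * uy) with ((ux ^ 2 + uy ^ 2) / 2) by lra.
  replace (mx * wx + my * wy) with ((wx ^ 2 + wy ^ 2) / 2) by lra.
  field.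
Qed.

Lemma sides_prod_eq_circumradius_area (P Q S : R * R) (r : R) :
  on_circle_of_radius P Q S r ->
  dist2 P Q * dist2 Q S * dist2 P S = 4 * r * tri_area P Q S.
Proof.
  intros [c [HP [HQ HS]]].
  assert (Hr : 0 <= r) by (rewrite <- HP; apply dist2_ge0).
  apply Rsqr_inj.
  - repeat apply Rmult_le_pos; apply dist2_ge0.
  - pose proof (tri_area_ge0 P Q S). nra.
  - rewrite <- HP in HQ, HS |- *.
    apply (f_equal (fun z => z ^ 2)) in HQ, HS.
    rewrite !dist2_sq in HQ, HS. unfold Rsqr, tri_area.
    replace (4 * dist2 P c * (Rabs _ / 2) * (4 * dist2 P c * (Rabs _ / 2)))
      with (4 * dist2 P c ^ 2 *
            Rabs ((fst Q - fst P) * (snd S - snd P) - (snd Q - snd P) * (fst S - fst P)) ^ 2)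
      by field.
    rewrite pow2_abs.
    replace (dist2 P Q * dist2 Q S * dist2 P S * (dist2 P Q * dist2 Q S * dist2 P S))
      with (dist2 P Q ^ 2 * dist2 Q S ^ 2 * dist2 P S ^ 2) by ring.
    rewrite !dist2_sq.
    destruct P as [px py], Q as [qx qy], S as [sx sy], c as [cx cy]; cbn [fst snd] in *.
    assert (E := circumcircle_identity (qx - px) (qy - py) (sx - px) (sy - py)
                   (cx - px) (cy - py) ltac:(lra) ltac:(lra)).
    lra.
Qed.

Lemma sides_cube_ge (a b c : R) : 0 <= a -> 0 <= b -> 0 <= c -> c <= a + b ->
  4 * (a * b * c) <= (a + b) ^ 3.
Proof.
  intros Ha Hb Hc Hab.
  assert (a * b * c <= a * b * (a + b))
    by (apply Rmult_le_compat_l; [apply Rmult_le_pos|]; lra).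
  assert (0 <= (a - b) ^ 2 * (a + b)) by (apply Rmult_le_pos; [apply pow2_ge_0|lra]).
  nra.
Qed.

Lemma pow3_le_inv (u s : R) : 0 < u -> 0 <= s -> u ^ 3 <= s ^ 3 -> u <= s.
Proof.
  intros Hu Hs H. destruct (Rle_or_lt u s) as [|Hlt]; [assumption|].
  assert (0 < (u - s) * (u * u + u * s + s * s)) by (apply Rmult_lt_0_compat; nra).
  nra.
Qed.

Lemma Rpower_third_pow3 (z : R) : 0 < z -> Rpower z (1 / 3) ^ 3 = z.
Proof.
  intros Hz. rewrite <- Rpower_pow by apply exp_pos.
  rewrite Rpower_mult. replace (1 / 3 * INR 3) with 1 by (simpl; field).
  now apply Rpower_1.
Qed.

Lemma two_cube_root_le_adjacent_sides (P Q S : R * R) (A0 R0 r : R) :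
  0 < A0 -> 0 < R0 -> R0 <= r -> on_circle_of_radius P Q S r ->
  A0 / 2 <= tri_area P Q S ->
  2 * Rpower (A0 * R0) (1 / 3) <= dist2 P Q + dist2 Q S.
Proof.
  intros HA0 HR0 Hr Hcirc Harea.
  assert (Hprod : 2 * (A0 * R0) <= dist2 P Q * dist2 Q S * dist2 P S).
  { rewrite (sides_prod_eq_circumradius_area P Q S r Hcirc).
    pose proof (tri_area_ge0 P Q S). nra. }
  pose proof (sides_cube_ge _ _ _ (dist2_ge0 P Q) (dist2_ge0 Q S) (dist2_ge0 P S)
                (dist2_triangle P Q S)).
  apply pow3_le_inv.
  - pose proof (exp_pos ((1 / 3) * ln (A0 * R0))). unfold Rpower. lra.
  - pose proof (dist2_ge0 P Q). pose proof (dist2_ge0 Q S). lra.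
  - rewrite Rpow_mult_distr, Rpower_third_pow3 by nra. lra.
Qed.

Lemma sum_f_R0_adjacent_pairs_ge (d : nat -> R) (c : R) (n : nat) :
  (forall i, (i < n)%nat -> c <= d i + d (S i)) ->
  INR n * c <= 2 * sum_f_R0 d n - d 0%nat - d n.
Proof.
  induction n as [|n IH]; intros Hpairs.
  - simpl. lra.
  - rewrite S_INR. simpl sum_f_R0.
    pose proof (IH (fun i Hi => Hpairs i (Nat.lt_lt_succ_r _ _ Hi))).
    pose proof (Hpairs n (Nat.lt_succ_diag_r n)). lra.
Qed.

Lemma steps_le_first_last (t : nat -> R) (n : nat) :
  (forall i, (i < n)%nat -> t i <= t (S i)) -> t 0%nat <= t n.
Proof.
  induction n as [|n IH]; intros Hstep.
  - apply Rle_refl.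
  - apply Rle_trans with (t n); [apply IH; intros i Hi|]; apply Hstep; lia.
Qed.

Definition speed (x' y' : R -> R) (t : R) : R := sqrt (x' t ^ 2 + y' t ^ 2).

Lemma continuous_speed (x' y' : R -> R) (t : R) :
  continuous x' t -> continuous y' t -> continuous (speed x' y') t.
Proof.
  intros Hx Hy. apply continuous_sqrt_comp.
  apply (continuous_plus (fun z => x' z ^ 2) (fun z => y' z ^ 2));
    simpl; repeat apply (@continuous_mult _ R_AbsRing); auto using continuous_const.
Qed.

Section ArcLength.

Variables (x y x' y' : R -> R) (a b : R).
Hypothesis Hderiv : forall t, a <= t <= b -> is_derive x t (x' t) /\ is_derive y t (y' t).
Hypothesis Hcont : forall t, a <= t <= b -> continuous x' t /\ continuous y' t.

Lemma ex_RInt_speed (u v : R) : a <= u <= b -> a <= v <= b -> ex_RInt (speed x' y') u v.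
Proof.
  intros Hu Hv. apply (@ex_RInt_continuous R_CompleteNormedModule). intros z Hz.
  assert (Hab : a <= z <= b).
  { split; [apply Rle_trans with (Rmin u v) | apply Rle_trans with (Rmax u v)];
      try apply Hz; [apply Rmin_glb | apply Rmax_lub]; lra. }
  destruct (Hcont z Hab). now apply continuous_speed.
Qed.

Lemma RInt_speed_ge0 (u v : R) : a <= u -> u <= v -> v <= b -> 0 <= RInt (speed x' y') u v.
Proof.
  intros. apply RInt_ge_0; [lra | apply ex_RInt_speed; lra | intros; apply sqrt_pos].
Qed.

Lemma RInt_speed_le_length (u v : R) : a <= u -> u <= v -> v <= b ->
  RInt (speed x' y') u v <= RInt (speed x' y') a b.
Proof.
  intros Hau Huv Hvb.
  rewrite <- (RInt_Chasles (speed x' y') a v b), <- (RInt_Chasles (speed x' y') a u v);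
    try (apply ex_RInt_speed; lra).
  pose proof (RInt_speed_ge0 a u). pose proof (RInt_speed_ge0 v b).
  unfold plus; simpl. lra.
Qed.

(* The chord is the norm of the integral of the velocity. *)
Lemma dist2_le_RInt_speed (u v : R) : a <= u -> u <= v -> v <= b ->
  dist2 (x u, y u) (x v, y v) <= RInt (speed x' y') u v.
Proof.
  intros Hau Huv Hvb.
  assert (Hin : forall z, Rmin u v <= z <= Rmax u v -> a <= z <= b).
  { rewrite Rmin_left, Rmax_right by lra. intros; lra. }
  assert (Hvel : is_RInt (fun t => (x' t, y' t)) u v (x v - x u, y v - y u)).
  { apply (is_RInt_fct_extend_pair (fun t => (x' t, y' t))).
    - apply (is_RInt_derive x x'); intros z Hz; apply Hin in Hz;
        [apply Hderiv | apply Hcont]; exact Hz.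
    - apply (is_RInt_derive y y'); intros z Hz; apply Hin in Hz;
        [apply Hderiv | apply Hcont]; exact Hz. }
  replace (dist2 (x u, y u) (x v, y v)) with (norm (x v - x u, y v - y u))
    by (rewrite norm_pair; unfold dist2; simpl; f_equal; ring).
  apply (norm_RInt_le _ _ u v _ _ Huv) with (1 := fun z _ => Req_le _ _ (norm_pair _ _))
    (2 := Hvel).
  apply (@RInt_correct R_CompleteNormedModule), ex_RInt_speed; lra.
Qed.

Lemma polygon_le_RInt_speed (t : nat -> R) (n : nat) :
  (forall i, (i <= S n)%nat -> a <= t i <= b) ->
  (forall i, (i <= n)%nat -> t i <= t (S i)) ->
  sum_f_R0 (fun i => dist2 (x (t i), y (t i)) (x (t (S i)), y (t (S i)))) n
    <= RInt (speed x' y') (t 0%nat) (t (S n)).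
Proof.
  induction n as [|n IH]; intros Hin Hstep; simpl sum_f_R0.
  - apply dist2_le_RInt_speed; try apply Hstep; try apply Hin; lia.
  - rewrite <- (RInt_Chasles _ (t 0%nat) (t (S n)) (t (S (S n))))
      by (apply ex_RInt_speed; apply Hin; lia).
    pose proof (IH (fun i Hi => Hin i ltac:(lia)) (fun i Hi => Hstep i ltac:(lia))).
    pose proof (dist2_le_RInt_speed (t (S n)) (t (S (S n)))
                  ltac:(apply Hin; lia) ltac:(apply Hstep; lia) ltac:(apply Hin; lia)).
    unfold plus; simpl. lra.
Qed.

Lemma polygon_le_length (t : nat -> R) (n : nat) :
  (forall i, (i <= S n)%nat -> a <= t i <= b) ->
  (forall i, (i <= n)%nat -> t i <= t (S i)) ->
  sum_f_R0 (fun i => dist2 (x (t i), y (t i)) (x (t (S i)), y (t (S i)))) n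
    <= RInt (speed x' y') a b.
Proof.
  intros Hin Hstep.
  apply Rle_trans with (RInt (speed x' y') (t 0%nat) (t (S n))).
  - now apply polygon_le_RInt_speed.
  - apply RInt_speed_le_length; try (apply Hin; lia).
    apply steps_le_first_last. intros i Hi. apply Hstep. lia.
Qed.

End ArcLength.

Theorem theorem3p3
  (x y x' y' : R -> R) (a b : R)
  (HC : immersed_curve x y x' y' a b)
  (N : nat) (t : nat -> R)
  (Ht_in : forall j, (1 <= j <= N)%nat -> a <= t j <= b)
  (Ht_ord : forall j, (1 <= j < N)%nat -> t j < t (S j))
  (Hdist : forall i j, (1 <= i)%nat -> (i < j)%nat -> (j <= N)%nat ->
              (x (t i), y (t i)) <> (x (t j), y (t j)))
  (A0 R0 : R) (HA0 : 0 < A0) (HR0 : 0 < R0)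
  (Harea : forall j, (1 <= j)%nat -> (j + 2 <= N)%nat ->
     A0 / 2 <= tri_area (x (t j), y (t j)) (x (t (j+1)%nat), y (t (j+1)%nat))
                        (x (t (j+2)%nat), y (t (j+2)%nat)))
  (Hcirc : forall j, (1 <= j)%nat -> (j + 2 <= N)%nat ->
     exists r, R0 <= r /\
       on_circle_of_radius (x (t j), y (t j)) (x (t (j+1)%nat), y (t (j+1)%nat))
                           (x (t (j+2)%nat), y (t (j+2)%nat)) r) :
  INR N < 2 + curve_length x' y' a b / Rpower (A0 * R0) (1/3).
Proof.
  destruct HC as [Hab Hreg].
  assert (Hderiv : forall s, a <= s <= b -> is_derive x s (x' s) /\ is_derive y s (y' s))
    by (intros s Hs; destruct (Hreg s Hs) as (? & ? & _); auto).
  assert (Hcont : forall s, a <= s <= b -> continuous x' s /\ continuous y' s)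
    by (intros s Hs; destruct (Hreg s Hs) as (_ & _ & ? & ? & _); auto).
  change (curve_length x' y' a b) with (RInt (speed x' y') a b).
  set (L := RInt (speed x' y') a b). set (k := Rpower (A0 * R0) (1 / 3)).
  assert (Hk : 0 < k) by apply exp_pos.
  assert (HL : 0 <= L) by (apply (RInt_speed_ge0 x' y' a b Hcont); lra).
  assert (HLk : 0 <= L / k) by (apply Rdiv_le_0_compat; lra).
  destruct N as [| [| n]]; [simpl; lra | simpl; lra |].
  set (d := fun i => dist2 (x (t (S i)), y (t (S i))) (x (t (S (S i))), y (t (S (S i))))).
  assert (Hpairs : forall i, (i < n)%nat -> 2 * k <= d i + d (S i)).
  { intros i Hi. destruct (Hcirc (S i) ltac:(lia) ltac:(lia)) as [r [Hr Hon]].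
    pose proof (Harea (S i) ltac:(lia) ltac:(lia)) as HAi.
    replace (S i + 1)%nat with (S (S i)) in Hon, HAi by lia.
    replace (S i + 2)%nat with (S (S (S i))) in Hon, HAi by lia.
    exact (two_cube_root_le_adjacent_sides _ _ _ A0 R0 r HA0 HR0 Hr Hon HAi). }
  assert (Hd0 : 0 < d 0%nat) by (apply dist2_pos, Hdist; lia).
  assert (Hdn : 0 <= d n) by apply dist2_ge0.
  assert (Hpoly : sum_f_R0 d n <= L).
  { apply (polygon_le_length x y x' y' a b Hderiv Hcont (fun i => t (S i)));
      intros i Hi; [apply Ht_in | apply Rlt_le, Ht_ord]; lia. }
  pose proof (sum_f_R0_adjacent_pairs_ge d (2 * k) n Hpairs).
  assert (HLk_k : L / k * k = L) by (field; lra).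
  rewrite !S_INR. nra.
Qed.
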